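(* Fix $a(x)=|x|^{-\alpha}$ for $x\in\mathbb{Z}_{\neq0}$ and real $\alpha>3/2$, and for $\Delta\in\mathbb{R}$ let $$\tau_{\mathrm{eff}}^{-1}(\alpha,\Delta)=\frac12\sqrt{\frac{A(\alpha)\Delta^2+2B(\alpha)\Delta+C(\alpha)}{\sum_{n\neq0}n^2a(n)^2}},$$ with $A,B,C$ as below. Let $\Delta=\Delta(\alpha)$ satisfy $c^{\alpha}\Delta(\alpha)\to k$ as $\alpha\to\infty$, for constants $c>1$ and $k\in\mathbb{R}$. Then, as $\alpha\to\infty$: (i) if $1<c<2$ and $k\neq0$, then $\tau_{\mathrm{eff}}^{-1}(\alpha,\Delta(\alpha))\big/\bigl(|\Delta(\alpha)|/\sqrt2\bigr)\to1$; (ii) if $c=2$, then $2^{\alpha}\tau_{\mathrm{eff}}^{-1}(\alpha,\Delta(\alpha))\to\sqrt{\bigl((k-3)^2+1\bigr)/2}$, equivalently $\tau_{\mathrm{eff}}^{-1}\sim\sqrt{(\Delta^2-6\cdot2^{-\alpha}\Delta+10\cdot4^{-\alpha})/2}$; (iii) if $c>2$, then $2^{\alpha}\tau_{\mathrm{eff}}^{-1}(\alpha,\Delta(\alpha))\to\sqrt5$. In particular $2^{\alpha}\tau_{\mathrm{eff}}^{-1}(\alpha,\Delta^*(\alpha))\to1/\sqrt2$, where $\Delta^*(\alpha)=-B(\alpha)/A(\alpha)$, while $2^{\alpha}\tau_{\mathrm{eff}}^{-1}(\alpha,e^{2-\alpha})\to\sqrt5$.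
   Context: Here, with $a(x)=|x|^{-\alpha}$ and all sums over $u,v\in\mathbb{Z}_{\neq0}$ with $u+v\neq0$: $A=\sum(u+v)^2a(u+v)^2(a(u)-a(v))^2$, $B=\sum(u^2-v^2)a(u)a(v)a(u+v)(a(u)-a(v))$, $C=\sum(u-v)^2a(u)^2a(v)^2$. The quantity $\tau_{\mathrm{eff}}^{-1}$ is the estimated decay rate of the spin current of the XXZ chain with couplings $a(r)$ and $b(r)=\Delta a(r)$. *)

From HB Require Import structures.
From mathcomp Require Import all_boot all_order all_algebra.
From mathcomp Require Import all_classical all_reals all_analysis.
Set Implicit Arguments. Unset Strict Implicit. Unset Printing Implicit Defensive.
Import Order.TTheory GRing.Theory Num.Theory.
Import numFieldNormedType.Exports.
Local Open Scope ring_scope.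

Definition zrange (N : nat) : seq int :=
  [seq (i%:Z - N%:Z) | i <- iota 0 (2 * N + 1)].

Definition acoef {R : realType} (alpha : R) (x : int) : R :=
  ((`|x|%N)%:R : R) `^ (- alpha).

Definition dpsum {R : realType} (f : int -> int -> R) (N : nat) : R :=
  \sum_(u <- zrange N)
    \sum_(v <- zrange N | [&& u != 0, v != 0 & u + v != 0]) f u v.

(* the double series, as the limit of its square partial sums *)
Definition dsum {R : realType} (f : int -> int -> R) : R := limn (dpsum f).

Definition ssum {R : realType} (f : int -> R) : R :=
  limn (fun N => \sum_(n <- zrange N | n != 0) f n).

Definition Acoef {R : realType} (alpha : R) : R :=
  let a := acoef alpha in
  dsum (fun u v => ((u + v)%:~R) ^+ 2 * (a (u + v)) ^+ 2 * (a u - a v) ^+ 2).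

Definition Bcoef {R : realType} (alpha : R) : R :=
  let a := acoef alpha in
  dsum (fun u v => ((u%:~R) ^+ 2 - (v%:~R) ^+ 2) * a u * a v * a (u + v) * (a u - a v)).

Definition Ccoef {R : realType} (alpha : R) : R :=
  let a := acoef alpha in
  dsum (fun u v => ((u - v)%:~R) ^+ 2 * (a u) ^+ 2 * (a v) ^+ 2).

Definition tau_eff_inv {R : realType} (alpha Delta : R) : R :=
  2^-1 * Num.sqrt ((Acoef alpha * Delta ^+ 2 + 2 * Bcoef alpha * Delta + Ccoef alpha)
                   / ssum (fun n => (n%:~R) ^+ 2 * (acoef alpha n) ^+ 2)).

From mathcomp Require Import all_boot all_order all_algebra.
From mathcomp Require Import all_classical all_reals all_analysis.
From mathcomp Require Import ring lra zify.
Set Implicit Arguments. Unset Strict Implicit. Unset Printing Implicit Defensive.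
Import Order.TTheory GRing.Theory Num.Theory.
Import numFieldNormedType.Exports.
Local Open Scope ring_scope.
Local Open Scope classical_set_scope.

(* As alpha -> +oo every summand with an index of modulus >= 3 becomes negligible
   against the summands with |u|, |v| <= 2, where a(+-1) = 1 and a(+-2) = 2^-alpha.
   Bounding each tail summand by E(alpha) / (u^2 v^2), with E(alpha) decaying faster
   than the relevant power of 2 and sum 1/n^2 <= 4, gives
     A -> 4,   2^alpha B -> -12,   4^alpha C -> 40,   sum n^2 a(n)^2 -> 2.
   Hence, with D := 2^alpha Delta,
     (2^alpha tau_eff^-1)^2 = (A D^2 + 2 (2^alpha B) D + 4^alpha C) / (4 sum n^2 a(n)^2)
   tends to (4 k^2 - 24 k + 40) / 8 = ((k - 3)^2 + 1) / 2 when D -> k, which is (ii).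
   Case (iii), Delta = e^(2 - alpha) and Delta = -B/A (D -> 3) are instances of (ii);
   In case (i) one divides by Delta^2 instead; since 2^-alpha = o(Delta), only A
   survives. *)

Lemma zrangeS N : zrange N.+1 = - (N.+1)%:Z :: rcons (zrange N) (N.+1)%:Z.
Proof.
rewrite /zrange.
have -> : (2 * N.+1 + 1 = 1 + (2 * N + 1) + 1)%N by lia.
rewrite iotaD iotaD map_cat map_cat /= cats1 sub0r; congr (_ :: rcons _ _); last by lia.
by rewrite (iotaDl 1 0) -map_comp; apply: eq_map => i /=; lia.
Qed.

Lemma zrange2 : zrange 2 = [:: -2; -1; 0; 1; 2].
Proof. by []. Qed.

Lemma mem_zrange N u : u \in zrange N -> (`|u| <= N)%N.
Proof. by case/mapP=> i; rewrite mem_iota => /andP[_ iN] ->; lia. Qed.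

Section ZrangeSums.
Variable V : nmodType.
Implicit Type F : int -> V.

Lemma big_zrangeS F N :
  \sum_(u <- zrange N.+1) F u = F (- (N.+1)%:Z) + \sum_(u <- zrange N) F u + F (N.+1)%:Z.
Proof. by rewrite zrangeS big_cons big_rcons addrA. Qed.

Lemma big_zrange_supp F M N : (forall n, (M < `|n|)%N -> F n = 0) -> (M <= N)%N ->
  \sum_(u <- zrange N) F u = \sum_(u <- zrange M) F u.
Proof.
move=> F0; elim: N => [|N IHN]; first by rewrite leqn0 => /eqP->.
rewrite leq_eqVlt => /orP[/eqP-> //|]; rewrite ltnS => MN.
by rewrite big_zrangeS IHN // !F0 ?addr0 ?add0r // ?abszN absz_nat ltnS.
Qed.

End ZrangeSums.

Section InverseSquares.
Variable R : realType.
Implicit Types u v n : int.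

Definition zabs n : R := (`|n|%N)%:R.

Definition invsq n : R := (zabs n ^+ 2)^-1.

Lemma zabs_ge0 n : 0 <= zabs n.
Proof. by rewrite /zabs ler0n. Qed.

Lemma zabs_ge1 n : n != 0 -> 1 <= zabs n.
Proof. by move=> n0; rewrite /zabs ler1n absz_gt0. Qed.

Lemma zabs_ge3 n : (2 < `|n|)%N -> 3 <= zabs n.
Proof. by move=> n2; rewrite /zabs ler_nat. Qed.

Lemma zabsE n : zabs n = `|(n%:~R : R)|.
Proof. by rewrite /zabs natr_absz intr_norm. Qed.

Lemma zabs_sqr n : zabs n ^+ 2 = (n%:~R : R) ^+ 2.
Proof. by rewrite zabsE real_normK // num_real. Qed.

Lemma invsq_ge0 n : 0 <= invsq n.
Proof. by rewrite invr_ge0 exprn_ge0 // zabs_ge0. Qed.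

Lemma sum_invsq_zrange N : \sum_(u <- zrange N) invsq u <= 4 - 4 / N.+1%:R.
Proof.
elim: N => [|N IHN].
  by rewrite /zrange /= big_seq1 /invsq /zabs expr0n invr0 divr1 subrr.
rewrite big_zrangeS {1}/invsq {2}/invsq /zabs abszN absz_nat.
move: IHN; set n : R := N.+1%:R => IHN.
have -> : N.+2%:R = n + 1 :> R by rewrite /n -natr1.
have n1 : 1 <= n by rewrite ler1n.
suff : (n ^+ 2)^-1 + (n ^+ 2)^-1 <= 4 / n - 4 / (n + 1).
  move: IHN; set a := n ^- 2; set b := 4 / n; set c := 4 / (n + 1).
  by set S := \sum_(_ <- _) _; lra.
rewrite -subr_ge0.
have -> : 4 / n - 4 / (n + 1) - ((n ^+ 2)^-1 + (n ^+ 2)^-1) =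
    (2 * n - 2) / (n ^+ 2 * (n + 1)).
  by field; apply/andP; split; lra.
rewrite divr_ge0 ?mulr_ge0 ?exprn_ge0 //; lra.
Qed.

Lemma sum_invsq_le4 N : \sum_(u <- zrange N) invsq u <= 4.
Proof.
apply: le_trans (sum_invsq_zrange N) _.
by rewrite lerBlDr lerDl divr_ge0 // ler0n.
Qed.

End InverseSquares.

Section DominatedTail.
(* [psum g N] stands for the N-th (square) partial sum of the series of [g]
   over the index set [D]. *)
Variables (R : realType) (I : Type) (D : pred I) (psum : (I -> R) -> nat -> R).
Hypothesis psumD : forall g h N, psum (fun i => g i + h i) N = psum g N + psum h N.
Hypothesis psum_le :
  forall g h N, (forall i, D i -> g i <= h i) -> psum g N <= psum h N.
Hypothesis psum_nondecreasing :
  forall g, (forall i, D i -> 0 <= g i) -> nondecreasing_seq (psum g).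

Lemma psum0 N : psum (fun=> 0) N = 0.
Proof.
have := psumD (fun=> 0) (fun=> 0) N.
rewrite (_ : (fun=> 0 + 0) = fun=> 0); last by apply/funext => i; rewrite addr0.
by move/eqP; rewrite -{1}(addr0 (psum _ N)) (inj_eq (addrI _)) => /eqP <-.
Qed.

Lemma psumN g N : psum (fun i => - g i) N = - psum g N.
Proof.
apply/eqP; rewrite -addr_eq0 -psumD -(psum0 N); apply/eqP; congr psum.
by apply/funext => i; rewrite addNr.
Qed.

Lemma limn_psum_tail (f h : I -> R) (B : pred I) (M : R) (N0 : nat) :
  (forall i, D i -> 0 <= h i) ->
  (forall i, D i -> ~~ B i -> `|f i| <= h i) ->
  (forall N, psum h N <= M) ->
  (forall N, (N0 <= N)%N -> psum (fun i => if B i then f i else 0) N = psum f N0) ->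
  `|limn (psum f) - psum f N0| <= M.
Proof.
move=> h_ge0 f_le_h psum_hM psum_box.
pose ft i := if B i then 0 else f i.
have ft_le_h i : D i -> `|ft i| <= h i.
  by move=> Di; rewrite /ft; case: ifPn => [_|/(f_le_h i Di)//]; rewrite normr0 h_ge0.
have psumE N : (N0 <= N)%N -> psum f N = psum f N0 + psum ft N.
  move=> N0N; rewrite -(psum_box N N0N) -psumD; congr psum; apply/funext => i.
  by rewrite /ft; case: ifP; rewrite ?addr0 ?add0r.
have psum_ft_le N : `|psum ft N| <= M.
  apply: le_trans (psum_hM N); rewrite ler_norml -psumN.
  by rewrite !psum_le // => i /ft_le_h; rewrite ler_norml => /andP[? ?].
have psum_ft_cvg : cvgn (psum ft).
  have -> : psum ft = (fun N => psum (fun i => ft i + h i) N - psum h N).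
    by apply/funext => N; rewrite psumD addrK.
  apply: is_cvgB; apply: nondecreasing_is_cvgn.
  - apply: psum_nondecreasing => i /ft_le_h.
    by rewrite -lerBlDr sub0r ler_norml => /andP[? ?].
  - exists (M + M) => _ [N _ <-]; rewrite psumD lerD //.
    exact: le_trans (ler_norm _) (psum_ft_le N).
  - exact: psum_nondecreasing.
  - by exists M => _ [N _ <-].
have psum_f_cvg : psum f @ \oo --> psum f N0 + limn (psum ft).
  have psumE_near : \forall N \near \oo, psum f N0 + psum ft N = psum f N.
    by near=> N; rewrite [RHS]psumE //; near: N; exists N0.
  exact: cvg_trans (near_eq_cvg psumE_near) (cvgD (cvg_cst _) psum_ft_cvg).
rewrite (cvg_lim _ psum_f_cvg) // addrC addKr ler_norml.
by rewrite limr_ge ?limr_le //; near=> N;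
  move: (psum_ft_le N); rewrite ler_norml => /andP[].
Unshelve. all: end_near.
Qed.

End DominatedTail.

Local Notation nonzero_pair u v := [&& u != 0, v != 0 & u + v != 0].

Section SeriesTails.
Variable R : realType.
Implicit Types (f g h : int -> R) (E : R).

Definition spsum g N := \sum_(n <- zrange N | n != 0) g n.

Lemma spsum_nondecreasing g : (forall n, n != 0 -> 0 <= g n) ->
  nondecreasing_seq (spsum g).
Proof.
move=> g_ge0; apply/nondecreasing_seqP => N.
rewrite /spsum [leRHS]big_mkcond [leLHS]big_mkcond big_zrangeS /=.
by rewrite -addrA ler_wpDl ?ler_wpDr ?g_ge0.
Qed.

Lemma spsum_box g N : (2 <= N)%N ->
  spsum (fun n => if (`|n| <= 2)%N then g n else 0) N = spsum g 2.
Proof.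
move=> N2; rewrite /spsum !big_mkcond.
rewrite (@big_zrange_supp _ _ 2 N) //= => [|n].
  by rewrite [RHS]big_mkcond; apply: eq_big_seq => n /mem_zrange ->.
by move=> n2; rewrite leqNgt n2; case: ifP.
Qed.

Lemma ssum_tail_le f E : 0 <= E ->
  (forall n, n != 0 -> (2 < `|n|)%N -> `|f n| <= E * invsq R n) ->
  `|ssum f - spsum f 2| <= 4 * E.
Proof.
move=> E_ge0 f_tail.
apply: (@limn_psum_tail _ _ (fun n => n != 0) spsum _ _ _ f (fun n => E * invsq R n)
  (fun n => `|n| <= 2)%N).
- by move=> g h N; rewrite /spsum big_split.
- by move=> g h N gh; apply: ler_sum.
- exact: spsum_nondecreasing.
- by move=> n _; rewrite mulr_ge0 ?invsq_ge0.
- by move=> n n0; rewrite -ltnNge; apply: f_tail.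
- move=> N; rewrite /spsum -mulr_sumr mulrC ler_wpM2r //.
  apply: le_trans (sum_invsq_le4 R N); rewrite big_mkcond; apply: ler_sum => n _.
  by case: ifP => // _; exact: invsq_ge0.
- exact: spsum_box.
Qed.

Implicit Types (F G H : int -> int -> R).

Lemma dpsum_add G H N :
  dpsum (fun u v => G u v + H u v) N = dpsum G N + dpsum H N.
Proof. by rewrite /dpsum -big_split; apply: eq_bigr => u _; rewrite -big_split. Qed.

Lemma dpsum_nondecreasing G : (forall u v, nonzero_pair u v -> 0 <= G u v) ->
  nondecreasing_seq (dpsum G).
Proof.
move=> G_ge0; apply/nondecreasing_seqP => N; rewrite /dpsum big_zrangeS.
have inner_ge0 u M : 0 <= \sum_(v <- zrange M | nonzero_pair u v) G u v.
  by apply: sumr_ge0 => v; apply: G_ge0.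
rewrite -addrA ler_wpDl ?inner_ge0 // ler_wpDr ?inner_ge0 //.
apply: ler_sum => u _; rewrite [leRHS]big_mkcond [leLHS]big_mkcond big_zrangeS /=.
by rewrite -addrA ler_wpDl ?ler_wpDr //; case: ifP => // uv; exact: G_ge0.
Qed.

Lemma dpsum_box G N : (2 <= N)%N ->
  dpsum (fun u v => if (`|u| <= 2)%N && (`|v| <= 2)%N then G u v else 0) N =
  dpsum G 2.
Proof.
move=> N2; rewrite /dpsum (@big_zrange_supp _ _ 2 N) // => [|u u2]; last first.
  by rewrite big1 // => v _; rewrite leqNgt u2.
apply: eq_big_seq => u /mem_zrange u2; rewrite !big_mkcond.
rewrite (@big_zrange_supp _ _ 2 N) //= => [|v v2].
  by rewrite [RHS]big_mkcond; apply: eq_big_seq => v /mem_zrange v2; rewrite u2 v2.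
by rewrite [(`|v| <= 2)%N]leqNgt v2 andbF; case: ifP.
Qed.

Lemma dpsum_invsq E N : 0 <= E ->
  dpsum (fun u v => E * (invsq R u * invsq R v)) N <= 16 * E.
Proof.
move=> E_ge0; rewrite /dpsum.
apply: (@le_trans _ _
  (\sum_(u <- zrange N) \sum_(v <- zrange N) E * (invsq R u * invsq R v))).
  apply: ler_sum => u _; rewrite big_mkcond; apply: ler_sum => v _.
  by case: ifP => // _; rewrite !mulr_ge0 ?invsq_ge0.
have -> : \sum_(u <- zrange N) \sum_(v <- zrange N) E * (invsq R u * invsq R v) =
    E * ((\sum_(u <- zrange N) invsq R u) * \sum_(v <- zrange N) invsq R v).
  rewrite mulr_suml mulr_sumr; apply: eq_bigr => u _.
  by rewrite !mulr_sumr; apply: eq_bigr => v _.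
rewrite mulrC ler_wpM2r // (_ : 16 = 4 * 4 :> R); last by rewrite -natrM.
by apply: ler_pM; rewrite ?sum_invsq_le4 ?sumr_ge0 // => u _; exact: invsq_ge0.
Qed.

Lemma dsum_tail_le F E : 0 <= E ->
  (forall u v, nonzero_pair u v -> (2 < `|u|)%N || (2 < `|v|)%N ->
     `|F u v| <= E * (invsq R u * invsq R v)) ->
  `|dsum F - dpsum F 2| <= 16 * E.
Proof.
move=> E_ge0 F_tail.
apply: (@limn_psum_tail _ _ (fun p => nonzero_pair p.1 p.2)
  (fun k N => dpsum (fun u v => k (u, v)) N) _ _ _ (fun p => F p.1 p.2)
  (fun p => E * (invsq R p.1 * invsq R p.2))
  (fun p => (`|p.1| <= 2) && (`|p.2| <= 2))%N (16 * E) 2).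
- by move=> g h N; rewrite dpsum_add.
- by move=> g h N gh; apply: ler_sum => u _; apply: ler_sum => v uv; apply: (gh (u, v)).
- by move=> g g_ge0; apply: dpsum_nondecreasing => u v uv; apply: (g_ge0 (u, v)).
- by move=> p _; rewrite !mulr_ge0 ?invsq_ge0.
- by move=> [u v] uv; rewrite negb_and -!ltnNge; apply: F_tail.
- by move=> N; apply: dpsum_invsq.
- exact: (dpsum_box F).
Qed.

End SeriesTails.

Section TermBounds.
Variable R : realType.
Implicit Types (u v : int) (al : R).
Local Notation zabs := (zabs R).
Local Notation invsq := (invsq R).

Lemma acoef_ge0 al u : 0 <= acoef al u.
Proof. exact: powR_ge0. Qed.

Lemma acoef_le al u v : 0 <= al -> u != 0 -> (`|u| <= `|v|)%N -> acoef al v <= acoef al u.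
Proof.
move=> al_ge0 u0 uv.
have zu_gt0 : 0 < zabs u := lt_le_trans ltr01 (zabs_ge1 R u0).
have zuv : zabs u <= zabs v by rewrite /zabs ler_nat.
rewrite /acoef !powRN lef_pV2 ?posrE ?powR_gt0 ?(lt_le_trans zu_gt0) //.
by apply: ge0_ler_powR; rewrite ?nnegrE ?zabs_ge0.
Qed.

Lemma powR_sqr (x t : R) : 0 <= x -> (x `^ t) ^+ 2 = (x ^+ 2) `^ t.
Proof. by move=> x_ge0; rewrite !expr2 powRM. Qed.

Lemma powRN_le_split (W W0 al : R) (b : nat) : 0 < W0 -> W0 <= W -> b%:R <= al ->
  W `^ (- al) <= (W ^+ b)^-1 * W0 `^ (- (al - b%:R)).
Proof.
move=> W0_gt0 W0W b_al; have W_gt0 : 0 < W := lt_le_trans W0_gt0 W0W.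
rewrite (_ : - al = - b%:R + - (al - b%:R)); last by ring.
rewrite powRD; last by apply/implyP => _; rewrite gt_eqF.
rewrite powR_invn; last exact: ltW.
apply: ler_wpM2l; first by rewrite invr_ge0 exprn_ge0 // ltW.
rewrite !powRN lef_pV2 ?posrE ?powR_gt0 //.
apply: ge0_ler_powR => //; first by rewrite subr_ge0.
  by rewrite nnegrE ltW.
by rewrite nnegrE ltW.
Qed.

(* A term X W^-al with W >= W0 decays like W0^-al once b powers of W are used
   to pay for the weight p^2 q^2 of the dominating series. *)
Lemma powRN_tail_le (X W W0 al K p q : R) (b : nat) : 0 <= X -> 0 < W0 -> W0 <= W ->
  b%:R <= al -> 1 <= p -> 1 <= q -> X * (p ^+ 2 * q ^+ 2) <= K * W ^+ b ->
  X * W `^ (- al) <= (K * W0 `^ (- (al - b%:R))) * ((p ^+ 2)^-1 * (q ^+ 2)^-1).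
Proof.
move=> X_ge0 W0_gt0 W0W b_al p1 q1 XK.
have W_gt0 : 0 < W := lt_le_trans W0_gt0 W0W.
apply: le_trans (ler_wpM2l X_ge0 (powRN_le_split W0_gt0 W0W b_al)) _.
set T := W0 `^ _; set Z := (W ^+ b)^-1 * T * ((p ^+ 2)^-1 * (q ^+ 2)^-1).
have W_neq0 : W ^+ b != 0 by rewrite expf_neq0 // gt_eqF.
have p_neq0 : p != 0 by rewrite gt_eqF // (lt_le_trans _ p1).
have q_neq0 : q != 0 by rewrite gt_eqF // (lt_le_trans _ q1).
have -> : X * ((W ^+ b)^-1 * T) = X * (p ^+ 2 * q ^+ 2) * Z.
  by rewrite /Z; field; rewrite W_neq0 p_neq0 q_neq0.
have -> : K * T * ((p ^+ 2)^-1 * (q ^+ 2)^-1) = K * W ^+ b * Z.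
  by rewrite /Z; field; rewrite W_neq0 p_neq0 q_neq0.
apply: ler_wpM2r => //; rewrite /Z !mulr_ge0 ?invr_ge0 ?exprn_ge0 ?powR_ge0 ?ltW //.
  exact: lt_le_trans ltr01 p1.
exact: lt_le_trans ltr01 q1.
Qed.

Lemma zabs_add_le u v : zabs v <= zabs u + zabs (u + v).
Proof.
rewrite !zabsE intrD.
have := ler_normB (u%:~R + v%:~R) (u%:~R : R).
by rewrite (_ : u%:~R + v%:~R - u%:~R = v%:~R :> R); [lra|ring].
Qed.

Lemma tail_bound_sym (F : int -> int -> R) (E : R) :
  (forall u v, F v u = F u v) ->
  (forall u v, (`|u| <= `|v|)%N -> nonzero_pair u v -> (2 < `|v|)%N ->
     `|F u v| <= E * (invsq u * invsq v)) ->
  forall u v, nonzero_pair u v -> (2 < `|u|)%N || (2 < `|v|)%N ->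
    `|F u v| <= E * (invsq u * invsq v).
Proof.
move=> F_sym F_le u v uv uv2; case: (leqP `|u| `|v|) => [le_uv|lt_vu].
  by apply: F_le => //; case/orP: uv2 => // u2; exact: leq_trans u2 le_uv.
rewrite -F_sym [invsq u * _]mulrC; apply: F_le; first exact: ltnW.
  by case/and3P: uv => u0 v0 uv0; rewrite v0 u0 addrC.
by case/orP: uv2 => // v2; exact: ltn_trans v2 lt_vu.
Qed.

End TermBounds.

Section Summands.
Variable R : realType.
Implicit Types (u v n : int) (al : R).
Local Notation zabs := (zabs R).
Local Notation invsq := (invsq R).

Definition A_term al u v : R :=
  ((u + v)%:~R) ^+ 2 * acoef al (u + v) ^+ 2 * (acoef al u - acoef al v) ^+ 2.

Definition B_term al u v : R :=
  ((u%:~R) ^+ 2 - (v%:~R) ^+ 2) * acoef al u * acoef al v * acoef al (u + v) *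
  (acoef al u - acoef al v).

Definition C_term al u v : R := ((u - v)%:~R) ^+ 2 * acoef al u ^+ 2 * acoef al v ^+ 2.

Definition S_term al n : R := (n%:~R) ^+ 2 * acoef al n ^+ 2.

Definition Scoef al : R := ssum (S_term al).

Lemma AcoefE al : Acoef al = dsum (A_term al). Proof. by []. Qed.
Lemma BcoefE al : Bcoef al = dsum (B_term al). Proof. by []. Qed.
Lemma CcoefE al : Ccoef al = dsum (C_term al). Proof. by []. Qed.

Lemma C_term_tail al u v : 2 <= al -> nonzero_pair u v -> (2 < `|u|)%N || (2 < `|v|)%N ->
  `|C_term al u v| <= (4 * 9 `^ (- (al - 2%:R))) * (invsq u * invsq v).
Proof.
move=> al2 /and3P[u0 v0 _] uv2.
have p1 := zabs_ge1 R u0; have q1 := zabs_ge1 R v0.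
have uv_le : `|(u - v)%:~R : R| <= zabs u + zabs v by rewrite intrB !zabsE ler_normB.
have pq3 : 3 <= zabs u * zabs v.
  by case/orP: uv2 => /(zabs_ge3 R) ?; nra.
rewrite /C_term /invsq /acoef -/(zabs u) -/(zabs v) -mulrA !powR_sqr ?zabs_ge0 //.
rewrite -powRM ?exprn_ge0 ?zabs_ge0 //.
rewrite ger0_norm; last by rewrite mulr_ge0 ?sqr_ge0 ?powR_ge0.
move: uv_le pq3 p1 q1; rewrite -real_normK ?num_real //.
set t := `|_|; set p := zabs u; set q := zabs v => tpq pq3 p1 q1.
have t_ge0 : 0 <= t by rewrite normr_ge0.
apply: powRN_tail_le => //; rewrite ?sqr_ge0 -?exprMn //; first nra.
have t2m : t <= 2 * (p * q) by nra.
set m := p * q in t2m pq3 *.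
have t_le : t ^+ 2 <= (2 * m) ^+ 2 by rewrite lerXn2r ?nnegrE //; nra.
have -> : 4 * (m ^+ 2) ^+ 2 = (2 * m) ^+ 2 * m ^+ 2 by ring.
by rewrite exprMn ler_wpM2r ?sqr_ge0.
Qed.

Lemma S_term_tail al n : 2 <= al -> n != 0 -> (2 < `|n|)%N ->
  `|S_term al n| <= 9 `^ (- (al - 2%:R)) * invsq n.
Proof.
move=> al2 n0 n2.
have p3 := zabs_ge3 R n2; have p1 := zabs_ge1 R n0.
rewrite /S_term /invsq -zabs_sqr /acoef -/(zabs n) powR_sqr ?zabs_ge0 //.
rewrite ger0_norm ?mulr_ge0 ?sqr_ge0 ?powR_ge0 //.
have p2_ge9 : 9 <= zabs n ^+ 2 by nra.
have := powRN_tail_le (sqr_ge0 (zabs n)) (ltr0n _ 9) p2_ge9 al2 p1 (lexx 1)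
  (_ : _ <= 1 * zabs n ^+ 2 ^+ 2).
rewrite expr1n invr1 !mulr1 !mul1r; apply.
by rewrite expr2.
Qed.

(* For |u| <= |v| with |v| >= 3, |v| <= |u| + |u + v| forces |u| |u + v| >= 2, so the
   factor (|u| |u + v|)^(-2 al) below decays at least like 4^-al. *)
Lemma A_term_tail al u v : 4 <= al -> nonzero_pair u v -> (2 < `|u|)%N || (2 < `|v|)%N ->
  `|A_term al u v| <= (4 * 4 `^ (- (al - 4%:R))) * (invsq u * invsq v).
Proof.
move=> al4; have al_ge0 : 0 <= al by lra.
move: u v; apply: tail_bound_sym => [u v|u v uv /and3P[u0 v0 s0] v2].
  by rewrite /A_term [v + u]addrC; ring.
have p1 := zabs_ge1 R u0; have q3 := zabs_ge3 R v2; have r1 := zabs_ge1 R s0.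
have qpr := zabs_add_le R u v.
have a_uv := acoef_le al_ge0 u0 uv; have av_ge0 := acoef_ge0 al v.
rewrite ger0_norm; last by apply: mulr_ge0; [apply: mulr_ge0|]; exact: sqr_ge0.
have au_le : (acoef al u - acoef al v) ^+ 2 <= acoef al u ^+ 2.
  by rewrite lerXn2r ?nnegrE; lra.
apply: le_trans (ler_wpM2l (mulr_ge0 (sqr_ge0 _) (sqr_ge0 _)) au_le) _.
rewrite -zabs_sqr /acoef -!/(zabs _) -mulrA !powR_sqr ?zabs_ge0 //.
rewrite -powRM ?exprn_ge0 ?zabs_ge0 // -exprMn /invsq.
move: p1 q3 r1 qpr; set p := zabs u; set q := zabs v; set r := zabs (u + v).
move=> p1 q3 r1 qpr; have rp2 : 2 <= r * p by nra.
apply: powRN_tail_le => //; rewrite ?sqr_ge0 //; first nra; first nra.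
have q_le : q <= 2 * (r * p) by nra.
set m := r * p in rp2 q_le *.
have -> : r ^+ 2 * (p ^+ 2 * q ^+ 2) = m ^+ 2 * q ^+ 2 by rewrite /m; ring.
have q2_le : q ^+ 2 <= (2 * m) ^+ 2 by rewrite lerXn2r ?nnegrE; nra.
apply: le_trans (ler_wpM2l (sqr_ge0 m) q2_le) _.
have -> : m ^+ 2 * (2 * m) ^+ 2 = 4 * m ^+ 4 by ring.
have -> : 4 * (m ^+ 2) ^+ 4 = 4 * m ^+ 4 * m ^+ 4 by ring.
by rewrite ler_peMr ?mulr_ge0 ?exprn_ge0 ?exprn_ege1 //; nra.
Qed.

Lemma B_term_tail al u v : 4 <= al -> nonzero_pair u v -> (2 < `|u|)%N || (2 < `|v|)%N ->
  `|B_term al u v| <= (2 * 4 `^ (- (al - 4%:R))) * (invsq u * invsq v).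
Proof.
move=> al4; have al_ge0 : 0 <= al by lra.
move: u v; apply: tail_bound_sym => [u v|u v uv /and3P[u0 v0 s0] v2].
  by rewrite /B_term [v + u]addrC; ring.
have p1 := zabs_ge1 R u0; have q3 := zabs_ge3 R v2; have r1 := zabs_ge1 R s0.
have qpr := zabs_add_le R u v.
have a_uv := acoef_le al_ge0 u0 uv; have av_ge0 := acoef_ge0 al v.
have X_le : `|(u%:~R : R) ^+ 2 - v%:~R ^+ 2| <= (zabs u + zabs v) * zabs (u + v).
  have -> : (u%:~R : R) ^+ 2 - (v%:~R : R) ^+ 2 =
      (u%:~R - v%:~R) * (u%:~R + v%:~R) :> R by ring.
  by rewrite normrM !zabsE intrD ler_wpM2r // ler_normB.
rewrite /B_term !normrM !(ger0_norm (acoef_ge0 _ _)).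
rewrite [`|acoef al u - _|]ger0_norm ?subr_ge0 //.
apply: le_trans (ler_wpM2l _ (_ : acoef al u - acoef al v <= acoef al u)) _.
- by rewrite !mulr_ge0 ?acoef_ge0.
- lra.
rewrite /acoef -!/(zabs _) -!mulrA -!powRM ?mulr_ge0 ?zabs_ge0 // /invsq.
move: p1 q3 r1 qpr X_le; set p := zabs u; set q := zabs v; set r := zabs (u + v).
set X := `|_|; have X_ge0 : 0 <= X by rewrite normr_ge0.
move=> p1 q3 r1 qpr X_le; have rp2 : 2 <= r * p by nra.
have q1 : 1 <= q by lra.
rewrite [X in _ <= X]mulrA (_ : p * (q * (r * p)) = p * q * r * p); last by ring.
apply: powRN_tail_le => //.
  have qrp6 : 6 <= q * (r * p) by nra.
  by rewrite (_ : p * q * r * p = q * (r * p) * p); [nra|ring].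
set A := p * q * r.
have A1 : 1 <= A by rewrite /A; nra.
have X_le2A : X <= 2 * A.
  by apply: le_trans X_le _; rewrite /A !mulrA ler_wpM2r //; nra.
have pq_le : p ^+ 2 * q ^+ 2 <= A ^+ 2.
  have pq_ge0 : 0 <= p * q by nra.
  by rewrite -exprMn lerXn2r ?nnegrE /A ?ler_peMr ?mulr_ge0 //; lra.
apply: le_trans (ler_pM X_ge0 (mulr_ge0 (sqr_ge0 _) (sqr_ge0 _)) X_le2A pq_le) _.
have -> : 2 * A * A ^+ 2 = 2 * A ^+ 3 by ring.
have -> : 2 * (A * p) ^+ 4 = 2 * A ^+ 3 * (A * p ^+ 4) by ring.
by rewrite ler_peMr ?mulr_ge0 ?exprn_ge0 // -[1]mulr1 ler_pM ?exprn_ege1 //; lra.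
Qed.

End Summands.

Lemma dpsum_zrange2 (R : realType) (F : int -> int -> R) : dpsum F 2 =
  F (-2) (-2) + (F (-2) (-1) + (F (-2) 1 + 0)) +
  (F (-1) (-2) + (F (-1) (-1) + (F (-1) 2 + 0)) +
   (0 + (F 1 (-2) + (F 1 1 + (F 1 2 + 0)) +
     (F 2 (-1) + (F 2 1 + (F 2 2 + 0)) + 0)))).
Proof. by rewrite /dpsum zrange2 !big_cons !big_nil. Qed.

Section BoxSums.
Variables (R : realType) (al : R).

Let acoef_one : acoef al 1 = 1. Proof. by rewrite /acoef powR1. Qed.
Let acoef_mone : acoef al (-1) = 1. Proof. by rewrite /acoef powR1. Qed.
Let acoefE := (acoef_one, acoef_mone, erefl : acoef al (-2) = acoef al 2,
  erefl : acoef al (-3) = acoef al 3, erefl : acoef al (-4) = acoef al 4).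

Let intE := (erefl : (-2 - 2 : int) = -4, erefl : (-2 - 1 : int) = -3,
  erefl : (-2 + 1 : int) = -1, erefl : (-1 - 2 : int) = -3, erefl : (-1 - 1 : int) = -2,
  erefl : (-1 + 2 : int) = 1, erefl : (1 - 2 : int) = -1, erefl : (1 + 1 : int) = 2,
  erefl : (1 + 2 : int) = 3, erefl : (2 - 1 : int) = 1, erefl : (2 + 1 : int) = 3,
  erefl : (2 + 2 : int) = 4, erefl : (1 - 1 : int) = 0, erefl : (-1 + 1 : int) = 0,
  erefl : (-2 + 2 : int) = 0, erefl : (2 - 2 : int) = 0).

Let intrN1 : ((-1 : int)%:~R : R) = -1. Proof. by rewrite mulrNz. Qed.
Let intrN2 : ((-2 : int)%:~R : R) = -2. Proof. by rewrite mulrNz. Qed.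
Let intrN3 : ((-3 : int)%:~R : R) = -3. Proof. by rewrite mulrNz. Qed.
Let intrN4 : ((-4 : int)%:~R : R) = -4. Proof. by rewrite mulrNz. Qed.
Let intrE := (intrN1, intrN2, intrN3, intrN4).

Lemma A_term_box : dpsum (A_term al) 2 =
  4 * (1 - acoef al 2) ^+ 2 + 36 * acoef al 3 ^+ 2 * (1 - acoef al 2) ^+ 2.
Proof. by rewrite dpsum_zrange2 /A_term !intE !acoefE !intrE !pmulrn; ring. Qed.

Lemma B_term_box : dpsum (B_term al) 2 =
  - 12 * acoef al 2 * (1 - acoef al 2) * (1 + acoef al 3).
Proof. by rewrite dpsum_zrange2 /B_term !intE !acoefE !intrE !pmulrn; ring. Qed.

Lemma C_term_box : dpsum (C_term al) 2 = 40 * acoef al 2 ^+ 2.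
Proof. by rewrite dpsum_zrange2 /C_term !intE !acoefE !intrE !pmulrn; ring. Qed.

Lemma S_term_box : spsum (S_term al) 2 = 2 + 8 * acoef al 2 ^+ 2.
Proof.
by rewrite /spsum zrange2 !big_cons big_nil /S_term /= !acoefE !intrE !pmulrn; ring.
Qed.

End BoxSums.

Lemma cvg_approx {T : Type} {F : set_system T} {FF : Filter F} (R : realFieldType)
    (f g e : T -> R) (l : R) :
  (\forall x \near F, `|f x - g x| <= e x) -> g @ F --> l -> e @ F --> 0 -> f @ F --> l.
Proof.
move=> fge gl e0; apply: (@squeeze_cvgr _ _ _ _ (fun x => g x - e x) (fun x => g x + e x)).
- by near=> x; rewrite -ler_distl; near: x.
- by rewrite -[l]subr0; apply: cvgB.
- by rewrite -[l]addr0; apply: cvgD.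
Unshelve. all: end_near. Qed.

Section Decay.
Variable R : realType.

Lemma cvg_expRNM (k : R) : 0 < k -> expR (- (x * k)) @[x --> +oo] --> 0.
Proof.
move=> k0; apply/cvgrPdist_le => e e0; near=> x.
rewrite sub0r normrN ger0_norm ?expR_ge0 // expRN -[leRHS]invrK.
rewrite lef_pV2 ?posrE ?expR_gt0 ?invr_gt0 // (le_trans _ (expR_ge1Dx _)) //.
by rewrite -lerBlDl -ler_pdivrMr //; near: x; apply: nbhs_pinfty_ge; exact: num_real.
Unshelve. end_near. Qed.

Lemma cvg_powR_ratio (c d b : R) : 0 < c -> c < d ->
  c `^ x * d `^ (- (x - b)) @[x --> +oo] --> 0.
Proof.
move=> c0 cd; have d0 : 0 < d := lt_trans c0 cd.
have k0 : 0 < ln d - ln c by rewrite subr_gt0 ltr_ln.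
have -> : (fun x => c `^ x * d `^ (- (x - b))) =
    fun x => d `^ b * expR (- (x * (ln d - ln c))).
  by apply/funext => x; rewrite /powR !gt_eqF // -!expRD; congr expR; ring.
by rewrite -(mulr0 (d `^ b)); apply: cvgMl_tmp; exact: cvg_expRNM.
Qed.

Lemma cvg_powRN (d b : R) : 1 < d -> d `^ (- (x - b)) @[x --> +oo] --> 0.
Proof.
move=> d1; have := cvg_powR_ratio b ltr01 d1.
by under eq_fun do rewrite powR1 mul1r.
Qed.

Lemma acoef_cvg0 n : (1 < `|n|)%N -> acoef x n @[x --> +oo] --> (0 : R).
Proof.
move=> n1; have := @cvg_powRN (`|n|%N%:R) 0; rewrite ltr1n => /(_ n1).
by under eq_fun do rewrite subr0.
Qed.

Lemma powR2_acoef2 (x : R) : 2 `^ x * acoef x 2 = 1.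
Proof. by rewrite /acoef powRN mulfV // gt_eqF // powR_gt0. Qed.

Lemma near_pinfty_ge (r : R) : \forall x \near +oo, r <= x.
Proof. by apply: nbhs_pinfty_ge; exact: num_real. Qed.

End Decay.

Lemma cvg_sqr {T : Type} {F : set_system T} {FF : Filter F} (R : realType)
    (f : T -> R) (a : R) : f @ F --> a -> (fun x => f x ^+ 2) @ F --> a ^+ 2.
Proof. exact: (continuous_cvg _ (@exprn_continuous R 2 a)). Qed.

Section CoefficientLimits.
Variable R : realType.

Let acoef2_cvg0 : acoef x 2 @[x --> +oo] --> (0 : R). Proof. exact: acoef_cvg0. Qed.
Let acoef3_cvg0 : acoef x 3 @[x --> +oo] --> (0 : R). Proof. exact: acoef_cvg0. Qed.
Let one_minus_acoef2_cvg1 : 1 - acoef x 2 @[x --> +oo] --> (1 : R).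
Proof. by rewrite -[X in _ --> X]subr0; apply: cvgB => //; exact: cvg_cst. Qed.

Lemma Acoef_cvg : Acoef x @[x --> +oo] --> (4 : R).
Proof.
apply: (@cvg_approx _ _ _ _ _
  (fun x => 4 * (1 - acoef x 2) ^+ 2 + 36 * acoef x 3 ^+ 2 * (1 - acoef x 2) ^+ 2)
  (fun x => 16 * (4 * 4 `^ (- (x - 4%:R))))).
- near=> x; rewrite AcoefE -A_term_box; apply: dsum_tail_le.
    by rewrite mulr_ge0 ?powR_ge0.
  by move=> u v; apply: A_term_tail; near: x; exact: near_pinfty_ge.
- rewrite [X in _ --> X](_ : 4 = 4 * 1 ^+ 2 + 36 * 0 ^+ 2 * 1 ^+ 2); last first.
    by rewrite expr0n /=; ring.
  apply: cvgD; first by apply: cvgMl_tmp; apply: cvg_sqr; exact: one_minus_acoef2_cvg1.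
  apply: cvgM; last by apply: cvg_sqr; exact: one_minus_acoef2_cvg1.
  by apply: cvgMl_tmp; apply: cvg_sqr; exact: acoef3_cvg0.
- rewrite -(mulr0 16) -(mulr0 4); apply: cvgMl_tmp; apply: cvgMl_tmp.
  by apply: cvg_powRN; lra.
Unshelve. all: end_near. Qed.

Lemma Bcoef_cvg : 2 `^ x * Bcoef x @[x --> +oo] --> (-12 : R).
Proof.
apply: (@cvg_approx _ _ _ _ _ (fun x => -12 * (1 - acoef x 2) * (1 + acoef x 3))
  (fun x => 32 * (2 `^ x * 4 `^ (- (x - 4%:R))))).
- near=> x.
  have -> : 2 `^ x * Bcoef x - -12 * (1 - acoef x 2) * (1 + acoef x 3) =
      2 `^ x * (Bcoef x - (-12 * acoef x 2 * (1 - acoef x 2) * (1 + acoef x 3))).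
    rewrite [RHS]mulrBr; congr (_ - _).
    rewrite (_ : 2 `^ x * (-12 * acoef x 2 * (1 - acoef x 2) * (1 + acoef x 3)) =
      -12 * (2 `^ x * acoef x 2) * (1 - acoef x 2) * (1 + acoef x 3)); last by ring.
    by rewrite powR2_acoef2 mulr1.
  rewrite normrM ger0_norm ?powR_ge0 //.
  rewrite (_ : 32 * _ = 2 `^ x * (16 * (2 * 4 `^ (- (x - 4%:R))))); last by ring.
  rewrite ler_wpM2l ?powR_ge0 // BcoefE -B_term_box dsum_tail_le ?mulr_ge0 ?powR_ge0 //.
  by move=> u v; apply: B_term_tail; near: x; exact: near_pinfty_ge.
- rewrite [X in _ --> X](_ : -12 = -12 * 1 * (1 + 0)); last by ring.
  apply: cvgM; first by apply: cvgMl_tmp; exact: one_minus_acoef2_cvg1.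
  by apply: cvgD; [exact: cvg_cst|exact: acoef3_cvg0].
- by rewrite -(mulr0 32); apply: cvgMl_tmp; apply: cvg_powR_ratio; lra.
Unshelve. all: end_near. Qed.

Lemma Ccoef_cvg : (2 `^ x) ^+ 2 * Ccoef x @[x --> +oo] --> (40 : R).
Proof.
apply: (@cvg_approx _ _ _ _ _ (fun=> 40) (fun x => 64 * (4 `^ x * 9 `^ (- (x - 2%:R))))).
- near=> x.
  have -> : (2 `^ x) ^+ 2 * Ccoef x - 40 = (2 `^ x) ^+ 2 * (Ccoef x - 40 * acoef x 2 ^+ 2).
    rewrite [RHS]mulrBr; congr (_ - _).
    rewrite (_ : _ * (40 * _) = 40 * (2 `^ x * acoef x 2) ^+ 2); last by ring.
    by rewrite powR2_acoef2 expr1n mulr1.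
  have -> : (4 : R) `^ x = (2 `^ x) ^+ 2 by rewrite expr2 -powRM // -natrM.
  rewrite normrM ger0_norm ?exprn_ge0 ?powR_ge0 //.
  rewrite (_ : 64 * _ = (2 `^ x) ^+ 2 * (16 * (4 * 9 `^ (- (x - 2%:R))))); last by ring.
  rewrite ler_wpM2l ?exprn_ge0 ?powR_ge0 // CcoefE -C_term_box.
  rewrite dsum_tail_le ?mulr_ge0 ?powR_ge0 // => u v.
  by apply: C_term_tail; near: x; exact: near_pinfty_ge.
- exact: cvg_cst.
- by rewrite -(mulr0 64); apply: cvgMl_tmp; apply: cvg_powR_ratio; lra.
Unshelve. all: end_near. Qed.

Lemma Scoef_cvg : Scoef x @[x --> +oo] --> (2 : R).
Proof.
apply: (@cvg_approx _ _ _ _ _ (fun x => 2 + 8 * acoef x 2 ^+ 2)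
  (fun x => 4 * 9 `^ (- (x - 2%:R)))).
- near=> x; rewrite -S_term_box; apply: ssum_tail_le; first exact: powR_ge0.
  by move=> n; apply: S_term_tail; near: x; exact: near_pinfty_ge.
- rewrite [X in _ --> X](_ : 2 = 2 + 8 * 0 ^+ 2); last by rewrite expr0n mulr0 addr0.
  apply: cvgD; first exact: cvg_cst.
  by apply: cvgMl_tmp; apply: cvg_sqr; exact: acoef2_cvg0.
- by rewrite -(mulr0 4); apply: cvgMl_tmp; apply: cvg_powRN; lra.
Unshelve. all: end_near. Qed.

End CoefficientLimits.

Section Asymptotics.
Variable R : realType.
Implicit Types (k : R) (Delta : R -> R).

Lemma powR2_tau_eff_invE (al D : R) : 2 `^ al * tau_eff_inv al D =
  2^-1 * Num.sqrt ((Acoef al * (2 `^ al * D) ^+ 2 + 2 * (2 `^ al * Bcoef al) * (2 `^ al * D)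
                    + (2 `^ al) ^+ 2 * Ccoef al) / Scoef al).
Proof.
rewrite /tau_eff_inv mulrCA; congr (_ * _).
rewrite -{1}(ger0_norm (powR_ge0 2 al)) -sqrtr_sqr -sqrtrM ?sqr_ge0 //.
by congr Num.sqrt; rewrite /Scoef /S_term; ring.
Qed.

Lemma powR2_tau_eff_inv_cvg Delta k : 2 `^ x * Delta x @[x --> +oo] --> k ->
  2 `^ x * tau_eff_inv x (Delta x) @[x --> +oo] --> Num.sqrt (((k - 3) ^+ 2 + 1) / 2).
Proof.
move=> Dk; under eq_fun do rewrite powR2_tau_eff_invE.
have -> : Num.sqrt (((k - 3) ^+ 2 + 1) / 2) =
    2^-1 * Num.sqrt ((4 * k ^+ 2 + 2 * (-12) * k + 40) / 2).
  rewrite (_ : (4 * k ^+ 2 + 2 * (-12) * k + 40) / 2 = 2 ^+ 2 * (((k - 3) ^+ 2 + 1) / 2)).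
    by rewrite [in RHS]sqrtrM ?sqr_ge0 // sqrtr_sqr ger0_norm // mulrA mulVf // mul1r.
  by field.
apply: cvgMl_tmp; apply: (continuous_cvg _ (@sqrt_continuous R _)).
apply: cvgM; last by apply: cvgV; [rewrite pnatr_eq0 | exact: Scoef_cvg].
apply: cvgD; first apply: cvgD.
- by apply: cvgM; [exact: Acoef_cvg | exact: cvg_sqr].
- by apply: cvgM => //; apply: cvgMl_tmp; exact: Bcoef_cvg.
- exact: Ccoef_cvg.
Qed.

Lemma cvg_powR_rescale0 (c d : R) (f : R -> R) k : 0 < c -> c < d ->
  d `^ x * f x @[x --> +oo] --> k -> c `^ x * f x @[x --> +oo] --> 0.
Proof.
move=> c0 cd fk; have d0 : 0 < d := lt_trans c0 cd.
have -> : (fun x => c `^ x * f x) = fun x => (c `^ x * d `^ (- (x - 0))) * (d `^ x * f x).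
  by apply/funext => x; rewrite subr0 powRN; field; rewrite gt_eqF // powR_gt0.
by rewrite -(mul0r k); apply: cvgM => //; exact: cvg_powR_ratio.
Qed.

Lemma powR2_tau_eff_inv_cvg_fast (c : R) Delta k : 2 < c ->
  c `^ x * Delta x @[x --> +oo] --> k ->
  2 `^ x * tau_eff_inv x (Delta x) @[x --> +oo] --> Num.sqrt 5.
Proof.
move=> c2 Dk; have := powR2_tau_eff_inv_cvg (cvg_powR_rescale0 _ _ Dk).
by rewrite (_ : ((0 - 3) ^+ 2 + 1) / 2 = 5 :> R) //; [apply; lra | field].
Qed.

Lemma powR2_tau_eff_inv_expR :
  2 `^ x * tau_eff_inv x (expR (2 - x)) @[x --> +oo] --> Num.sqrt (5 : R).
Proof.
have e2 : (2 : R) < expR 1 by have := @expR_gt1Dx R 1 (oner_neq0 _); lra.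
apply: (powR2_tau_eff_inv_cvg_fast (c := expR 1) (k := expR 2) e2).
have -> : (fun x => expR 1 `^ x * expR (2 - x)) = fun _ : R => expR 2.
  by apply/funext => x; rewrite /powR gt_eqF ?expR_gt0 // expRK mulr1 -expRD addrC subrK.
exact: cvg_cst.
Qed.

Lemma powR2_tau_eff_inv_optimal :
  2 `^ x * tau_eff_inv x (- Bcoef x / Acoef x) @[x --> +oo] --> 1 / Num.sqrt (2 : R).
Proof.
have D3 : 2 `^ x * (- Bcoef x / Acoef x) @[x --> +oo] --> (3 : R).
  under eq_fun do rewrite mulrA mulrN.
  rewrite (_ : (3 : R) = - (-12) * 4^-1); last by field.
  apply: cvgM; first by apply: cvgN; exact: Bcoef_cvg.
  by apply: cvgV; [rewrite pnatr_eq0 | exact: Acoef_cvg].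
have := powR2_tau_eff_inv_cvg D3.
by rewrite (_ : ((3 - 3) ^+ 2 + 1) / 2 = 2^-1 :> R) ?sqrtrV ?div1r //; field.
Qed.

Lemma sqrt_mul_div_norm (Y d : R) :
  Num.sqrt Y * (Num.sqrt 2 / `|d|) = Num.sqrt (2 * Y / d ^+ 2).
Proof.
have [Y_ge0|Y_lt0] := lerP 0 Y.
  rewrite -sqrtr_sqr -sqrtrV ?sqr_ge0 // -sqrtrM // -sqrtrM //.
  by congr Num.sqrt; ring.
rewrite ler0_sqrtr ?mul0r ?ltW // ler0_sqrtr //.
by rewrite mulr_le0_ge0 ?invr_ge0 ?sqr_ge0 // pmulr_rle0 // ltW.
Qed.

(* With w := c^al Delta and rho := (c/2)^al, the quotient is an explicit
   continuous function of A, 2^al B, 4^al C, S, w and rho. *)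
Lemma tau_eff_inv_cvg_slow (c : R) Delta k : 1 < c -> c < 2 -> k != 0 ->
  c `^ x * Delta x @[x --> +oo] --> k ->
  tau_eff_inv x (Delta x) / (`|Delta x| / Num.sqrt 2) @[x --> +oo] --> (1 : R).
Proof.
move=> c1 c2 k0 Dk; have c0 : 0 < c by lra.
pose w x := c `^ x * Delta x; pose rho x := c `^ x * 2 `^ (- (x - 0)).
have rho0 : rho x @[x --> +oo] --> 0 by apply: cvg_powR_ratio; lra.
pose G x := 2 * (Acoef x + 2 * ((2 `^ x * Bcoef x) * rho x / w x) +
   ((2 `^ x) ^+ 2 * Ccoef x) * rho x ^+ 2 / w x ^+ 2) / Scoef x.
have GE : \forall x \near +oo,
    2^-1 * Num.sqrt (G x) = tau_eff_inv x (Delta x) / (`|Delta x| / Num.sqrt 2).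
  near=> x.
  have w0 : w x != 0 by near: x; exact: (cvgr_neq0 _ Dk k0).
  have D0 : Delta x != 0 by move: w0; rewrite mulf_eq0 negb_or => /andP[].
  have c_x : c `^ x != 0 by rewrite gt_eqF // powR_gt0.
  have two_x : (2 : R) `^ x != 0 by rewrite gt_eqF // powR_gt0.
  rewrite /tau_eff_inv invf_div -(mulrA 2^-1) sqrt_mul_div_norm; congr (_ * Num.sqrt _).
  rewrite /G; have -> : Acoef x + 2 * ((2 `^ x * Bcoef x) * rho x / w x) +
      ((2 `^ x) ^+ 2 * Ccoef x) * rho x ^+ 2 / w x ^+ 2 =
      (Acoef x * Delta x ^+ 2 + 2 * Bcoef x * Delta x + Ccoef x) / Delta x ^+ 2.
    by rewrite /rho /w subr0 powRN; field; rewrite two_x c_x D0.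
  by rewrite /Scoef /S_term; ring.
apply: cvg_trans (near_eq_cvg GE) _.
have G4 : G x @[x --> +oo] -->
    (2 * (4 + 2 * ((-12) * 0 / k) + 40 * 0 ^+ 2 / k ^+ 2) / 2 : R).
  apply: cvgM; last by apply: cvgV; [rewrite pnatr_eq0 | exact: Scoef_cvg].
  apply: cvgMl_tmp; apply: cvgD; first apply: cvgD.
  - exact: Acoef_cvg.
  - by apply: cvgMl_tmp; apply: cvgM; [apply: cvgM => //; exact: Bcoef_cvg | exact: cvgV].
  - apply: cvgM; first by apply: cvgM; [exact: Ccoef_cvg | exact: cvg_sqr].
    by apply: cvgV; [rewrite expf_neq0 | exact: cvg_sqr].
rewrite (_ : _ / 2 = 2 ^+ 2) in G4; last by field.
suff : 2^-1 * Num.sqrt (G x) @[x --> +oo] --> 2^-1 * Num.sqrt (2 ^+ 2 : R).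
  by rewrite sqrtr_sqr ger0_norm // mulVf.
by apply: cvgMl_tmp; exact: (continuous_cvg _ (@sqrt_continuous R _) G4).
Unshelve. all: end_near. Qed.

End Asymptotics.

Theorem mainTheorem4 (R : realType) :
  (forall (c k : R) (Delta : R -> R),
      1 < c -> c < 2 -> k != 0 ->
      (c `^ alpha * Delta alpha) @[alpha --> +oo] --> k ->
      (tau_eff_inv alpha (Delta alpha) / (`|Delta alpha| / Num.sqrt 2))
        @[alpha --> +oo] --> (1 : R)) /\
  (forall (k : R) (Delta : R -> R),
      (2 `^ alpha * Delta alpha) @[alpha --> +oo] --> k ->
      (2 `^ alpha * tau_eff_inv alpha (Delta alpha))
        @[alpha --> +oo] --> Num.sqrt (((k - 3) ^+ 2 + 1) / 2)) /\
  (forall (c k : R) (Delta : R -> R),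
      2 < c ->
      (c `^ alpha * Delta alpha) @[alpha --> +oo] --> k ->
      (2 `^ alpha * tau_eff_inv alpha (Delta alpha))
        @[alpha --> +oo] --> Num.sqrt 5) /\
  (((2 : R) `^ alpha * tau_eff_inv alpha (- Bcoef alpha / Acoef alpha))
     @[alpha --> +oo] --> 1 / Num.sqrt 2) /\
  (((2 : R) `^ alpha * tau_eff_inv alpha (expR (2 - alpha)))
     @[alpha --> +oo] --> Num.sqrt 5).
Proof.
split; first by move=> c k Delta; exact: tau_eff_inv_cvg_slow.
split; first by move=> k Delta; exact: powR2_tau_eff_inv_cvg.
split; first by move=> c k Delta; exact: powR2_tau_eff_inv_cvg_fast.
by split; [exact: powR2_tau_eff_inv_optimal | exact: powR2_tau_eff_inv_expR].
Qed.
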